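(* For every $\epsilon>0$ there is $k_0$ such that for every $k\geqslant k_0$ with $k-1$ a prime power the following holds. Let $G$ be the incidence graph of a projective plane of order $k-1$, let $e_0=v_0v_1$ be an edge of $G$, and let $\hat G$ be obtained from two disjoint copies $G^{(1)},G^{(2)}$ of $G$ by deleting the two copies of $e_0$ and adding the edges $v_0^{(1)}v_1^{(2)}$ and $v_0^{(2)}v_1^{(1)}$. Then $\sqrt{k-1}-1-\frac{1}{2\sqrt{k-1}}<R(\hat G)<\sqrt{k-1}-1-\frac{1}{(2+\epsilon)\sqrt{k-1}}$.
   Context: For a graph $H$ of order $n$ with adjacency eigenvalues $\lambda_1\geqslant\cdots\geqslant\lambda_n$, the HL-index is $R(H)=\max\{|\lambda_{\lfloor (n+1)/2\rfloor}|,\ |\lambda_{\lceil (n+1)/2\rceil}|\}$. The incidence graph of a projective plane is the bipartite graph whose two parts are the points and the lines, a point being adjacent to a line iff it lies on it. *)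

From HB Require Import structures.
From mathcomp Require Import all_boot all_order all_algebra all_field.
Set Implicit Arguments. Unset Strict Implicit. Unset Printing Implicit Defensive.
Import Order.TTheory GRing.Theory Num.Theory.
Local Open Scope ring_scope.

(* A simple graph on a finite vertex type T is given by a symmetric,
   irreflexive boolean relation (these properties are proved for the
   concrete graphs below, they are not needed for the definitions). *)

Definition adjmx (T : finType) (e : rel T) : 'M[algC]_#|T| :=
  \matrix_(i, j) (e (enum_val i) (enum_val j))%:R.

(* The eigenvalues (roots of the characteristic polynomial, with
   multiplicity), listed in nonincreasing order: lambda_1 >= ... >= lambda_n.
   For a symmetric real matrix they are all real, so this order is total. *)
Definition eigvals (n : nat) (A : 'M[algC]_n) : seq algC :=
  sort (fun x y => y <= x) (sval (closed_field_poly_normal (char_poly A))).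

(* lambda_i, 1-based. *)
Definition eigval (n : nat) (A : 'M[algC]_n) (i : nat) : algC :=
  nth 0 (eigvals A) i.-1.

Definition HL_index (T : finType) (e : rel T) : algC :=
  let n := #|T| in
  Num.max `|eigval (adjmx e) (n.+1)./2| `|eigval (adjmx e) (n.+2)./2|.

Definition projective_plane (P L : finType) (inc : P -> L -> bool) (q : nat) :
  Prop :=
  [/\ (2 <= q)%N,
      (forall l : L, #|[set p | inc p l]| = q.+1),
      (forall p : P, #|[set l | inc p l]| = q.+1),
      (forall p1 p2 : P, p1 != p2 -> exists! l : L, inc p1 l && inc p2 l)
    & (forall l1 l2 : L, l1 != l2 -> exists! p : P, inc p l1 && inc p l2)].

Definition incidence_graph (P L : finType) (inc : P -> L -> bool) :
  rel (P + L)%type :=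
  fun x y => match x, y with
             | inl p, inr l => inc p l
             | inr l, inl p => inc p l
             | _, _ => false
             end.

Definition double_switch (T : finType) (e : rel T) (v0 v1 : T) :
  rel (bool * T)%type :=
  fun x y =>
    let: (b, u) := x in let: (c, w) := y in
    if b == c then
      e u w && ~~ (((u == v0) && (w == v1)) || ((u == v1) && (w == v0)))
    else ((u == v0) && (w == v1)) || ((u == v1) && (w == v0)).

Definition prime_power (m : nat) : Prop :=
  exists p e : nat, [/\ prime p, (0 < e)%N & m = (p ^ e)%N].

(* Its
   adjacency operator commutes with swapping the copies, so its eigenvectors
   split into symmetric ones (eigenvectors of G itself) and antisymmetric
   ones (eigenvectors of the signed graph G_- in which ab carries weight -1).
   Using the incidence identities of the plane (every point has q+1 lines,
   two points share one line, and dually) every eigenvalue z satisfies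
      z^2 = q,  z^2 = (q+1)^2,  f(z) = 0  or  f(-z) = 0,
   where f(x) = x^3 - (q-1)x^2 - 3qx + q(q-1); conversely every root of f
   is an eigenvalue of G_-.  f has a unique root t in ]0, sqrt q[, and it is
   the smallest positive eigenvalue.  The graph is bipartite of even order,
   so the spectrum is symmetric: the two middle eigenvalues are t and -t,
   hence R = t.
   Elementary real analysis of f on [0, sqrt q] then gives
      sqrt q - 1 - 1/(2 sqrt q) < t < sqrt q - 1 - 1/((2+eps) sqrt q)
   for q large. *)

From HB Require Import structures.
From mathcomp Require Import all_boot all_order all_algebra all_field.
From mathcomp Require Import ring lra.
Import Order.TTheory GRing.Theory Num.Theory.
Set Implicit Arguments. Unset Strict Implicit. Unset Printing Implicit Defensive.
Local Open Scope ring_scope.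

(* The cubic whose smallest positive root is the HL-index (q is the order of
   the plane). *)
Definition hl_cubic (R : pzRingType) (q x : R) : R :=
  x ^+ 3 - (q - 1) * x ^+ 2 - 3 * q * x + q * (q - 1).

Lemma hl_cubic_decr (R : realFieldType) (s x y : R) : 2 <= s ^+ 2 -> 0 < s ->
  0 <= x -> x < y -> y <= s -> hl_cubic (s ^+ 2) y < hl_cubic (s ^+ 2) x.
Proof.
move=> hq hs hx hxy hy; rewrite /hl_cubic.
have h1 : x ^+ 2 + x * y + y ^+ 2 <= 3 * s ^+ 2 by nra.
have h2 : 0 < (s ^+ 2 - 1) * (x + y) by nra.
have -> : x ^+ 3 - (s ^+ 2 - 1) * x ^+ 2 - 3 * s ^+ 2 * x + s ^+ 2 * (s ^+ 2 - 1)
  = (y ^+ 3 - (s ^+ 2 - 1) * y ^+ 2 - 3 * s ^+ 2 * y + s ^+ 2 * (s ^+ 2 - 1))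
   + (y - x) * (3 * s ^+ 2 - (x ^+ 2 + x * y + y ^+ 2) + (s ^+ 2 - 1) * (x + y)) by ring.
rewrite ltrDl; apply: mulr_gt0; lra.
Qed.

(* f(-x) > 0 on ]0, s]: the roots of x |-> f(-x) are no positive eigenvalues
   below s. *)
Lemma hl_cubic_opp_gt0 (R : realFieldType) (s x : R) : 2 <= s ^+ 2 -> 0 < s ->
  0 < x -> x <= s -> 0 < hl_cubic (s ^+ 2) (- x).
Proof.
move=> hq hs hx hxs; rewrite /hl_cubic.
have h1 : x ^+ 2 <= s ^+ 2 by nra.
have h2 : 0 < x * (3 * s ^+ 2 - x ^+ 2) by nra.
have h3 : 0 <= (s ^+ 2 - 1) * (s ^+ 2 - x ^+ 2) by nra.
have -> : (- x) ^+ 3 - (s ^+ 2 - 1) * (- x) ^+ 2 - 3 * s ^+ 2 * (- x)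
    + s ^+ 2 * (s ^+ 2 - 1)
  = x * (3 * s ^+ 2 - x ^+ 2) + (s ^+ 2 - 1) * (s ^+ 2 - x ^+ 2) by ring.
lra.
Qed.

Lemma hl_cubic_lower_gt0 (R : realFieldType) (s : R) : 2 <= s ->
  0 < hl_cubic (s ^+ 2) (s - 1 - 1 / (2 * s)).
Proof.
move=> hs; have s0 : s != 0 by apply/negP => /eqP s0; rewrite s0 in hs; lra.
have -> : hl_cubic (s ^+ 2) (s - 1 - 1 / (2 * s))
    = (14 * s ^+ 3 + 2 * s ^+ 2 - 4 * s - 1) / (8 * s ^+ 3).
  by rewrite /hl_cubic; field; rewrite s0.
apply: divr_gt0; nra.
Qed.

Lemma hl_cubic_upper_lt0 (R : realFieldType) (s c : R) :
  2 <= s -> 0 < c -> 8 <= (1 - 2 * c) * s -> hl_cubic (s ^+ 2) (s - 1 - c / s) < 0.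
Proof.
move=> hs hc hd; have s0 : s != 0 by apply/negP => /eqP s0; rewrite s0 in hs; lra.
have -> : hl_cubic (s ^+ 2) (s - 1 - c / s)
   = ((2 * c - 1) * s ^+ 5 + (1 - 2 * c) * s ^+ 4 + (4 * c - c ^+ 2) * s ^+ 3
      + (3 * c ^+ 2 - c) * s ^+ 2 - 2 * c ^+ 2 * s - c ^+ 3) / s ^+ 3.
  by rewrite /hl_cubic; field; rewrite s0.
have c2 : c < 1 / 2 by nra.
have hs4 : 0 < s ^+ 4 by rewrite exprn_gt0 //; lra.
rewrite pmulr_llt0; last by rewrite invr_gt0 exprn_gt0 //; lra.
have h1 : (2 * c - 1) * s ^+ 5 + (1 - 2 * c) * s ^+ 4 <= - 4 * s ^+ 4.
  have -> : (2 * c - 1) * s ^+ 5 + (1 - 2 * c) * s ^+ 4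
      = - ((1 - 2 * c) * s) * s ^+ 4 + (1 - 2 * c) * s ^+ 4 by ring.
  have : (1 - 2 * c) * s ^+ 4 <= (1 - 2 * c) * s ^+ 4 * (s / 2) by nra.
  nra.
have h2 : (4 * c - c ^+ 2) * s ^+ 3 <= 2 * s ^+ 3 by nra.
have h3 : (3 * c ^+ 2 - c) * s ^+ 2 <= s ^+ 2 by nra.
have h4 : 0 <= 2 * c ^+ 2 * s + c ^+ 3 by nra.
nra.
Qed.

(* By the intermediate value theorem f has a root in ]0, s[: it is positive
   at 0 and negative at s. *)
Lemma hl_cubic_root_exists (R : rcfType) (s : R) : 2 <= s ^+ 2 -> 0 < s ->
  exists t, [/\ 0 < t, t < s & hl_cubic (s ^+ 2) t = 0].
Proof.
move=> hq hs; set q := s ^+ 2.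
pose p : {poly R} := - ('X^3 - (q - 1)%:P * 'X^2 - (3 * q)%:P * 'X + (q * (q - 1))%:P).
have pE x : p.[x] = - hl_cubic q x by rewrite /p /hl_cubic !hornerE.
have f0 : hl_cubic q 0 = q * (q - 1) by rewrite /hl_cubic; ring.
have fs : hl_cubic q s = - 2 * s ^+ 3 by rewrite /hl_cubic /q; ring.
have s3 : 0 < s ^+ 3 by rewrite exprn_gt0.
have [x /andP[x0 xs] rx] : exists2 x, 0 <= x <= s & root p x.
  apply: poly_ivt; first lra.
  rewrite !pE f0 fs; apply/andP; split; last lra.
  by rewrite oppr_le0 mulr_ge0 /q; lra.
move: rx; rewrite /root pE oppr_eq0 => /eqP fx.
exists x; split => //.
- rewrite lt_neqAle x0 andbT; apply/negP => /eqP x0'; move: fx; rewrite -x0' f0.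
  by move/eqP; rewrite mulf_eq0 => /orP[]/eqP; rewrite /q; lra.
- rewrite lt_neqAle xs andbT; apply/negP => /eqP xs'; move: fx; rewrite xs' fs; lra.
Qed.

Lemma hl_cubic_root_bounds (R : realFieldType) (s t c : R) : 2 <= s -> 0 < t -> t < s ->
  hl_cubic (s ^+ 2) t = 0 -> 0 < c -> 8 <= (1 - 2 * c) * s ->
  s - 1 - 1 / (2 * s) < t /\ t < s - 1 - c / s.
Proof.
move=> hs ht hts ft hc hd.
have sp : 0 < s by lra.
have hq : 2 <= s ^+ 2 by nra.
have c2 : c < 1 / 2 by nra.
have hL : 0 < s - 1 - 1 / (2 * s).
  have : 1 / (2 * s) <= 1 / 4 by rewrite ler_pdivrMr; nra.
  lra.
have hcs : c / s <= 1 / (2 * s).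
  rewrite ler_pdivrMr // mulrAC ler_pdivlMr; nra.
have hcs0 : 0 < c / s by apply: divr_gt0.
split; rewrite ltNge; apply/negP.
- rewrite le_eqVlt => /orP[/eqP tE|htL].
    by have := hl_cubic_lower_gt0 hs; rewrite -tE ft ltxx.
  have := hl_cubic_decr hq sp (ltW ht) htL; have := hl_cubic_lower_gt0 hs.
  rewrite ft; lra.
- rewrite le_eqVlt => /orP[/eqP tE|hUt].
    by have := hl_cubic_upper_lt0 hs hc hd; rewrite tE ft ltxx.
  have hU0 : 0 <= s - 1 - c / s by lra.
  have := hl_cubic_decr hq sp hU0 hUt (ltW hts); have := hl_cubic_upper_lt0 hs hc hd.
  rewrite ft; lra.
Qed.

Lemma hl_cubic_root_asymptotics (R : archiRealFieldType) (eps : R) : 0 < eps ->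
  exists n0 : nat, forall s t : R, n0%:R <= s -> 0 < t -> t < s ->
    hl_cubic (s ^+ 2) t = 0 ->
    s - 1 - 1 / (2 * s) < t /\ t < s - 1 - 1 / ((2 + eps) * s).
Proof.
move=> eps0; pose B := 8 * (2 + eps) / eps.
have B0 : 0 <= B by apply: divr_ge0; [apply: mulr_ge0; lra | lra].
exists (maxn (Num.Def.archi_bound B) 2) => s t sn0 t0 ts ft.
have s2 : 2 <= s by apply: le_trans sn0; rewrite (ler_nat _ 2); exact: leq_maxr.
have e2 : 2 + eps != 0 by rewrite gt_eqF //; lra.
pose c := 1 / (2 + eps).
have c0 : 0 < c by apply: divr_gt0; lra.
have hc : 1 - 2 * c = eps / (2 + eps) by rewrite /c; field.
have hd : 8 <= (1 - 2 * c) * s.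
  have hcB : (1 - 2 * c) * B = 8 by rewrite hc /B; field; rewrite (gt_eqF eps0) e2.
  have BsR : B <= s.
    apply: le_trans (ltW (archi_boundP B0)) _; apply: le_trans sn0.
    by rewrite ler_nat; exact: leq_maxl.
  rewrite -hcB ler_wpM2l // hc; apply: divr_ge0; lra.
have [lo hi] := hl_cubic_root_bounds s2 t0 ts ft c0 hd.
have s0 : s != 0 by rewrite gt_eqF //; lra.
suff -> : 1 / ((2 + eps) * s) = c / s by [].
by rewrite /c; field; rewrite e2 s0.
Qed.

Lemma sum_indicator (R : pzSemiRingType) (T : finType) (p : pred T) :
  \sum_x ((p x)%:R : R) = #|[set x | p x]|%:R.
Proof.
rewrite cardsE -sum1_card natr_sum [RHS]big_mkcond /=; apply: eq_bigr => x _.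
by rewrite unfold_in; case: (p x).
Qed.

Lemma sum_delta (R : pzSemiRingType) (T : finType) (F : T -> R) (b : T) :
  \sum_y F y * (y == b)%:R = F b.
Proof.
rewrite (bigD1 b) //= eqxx mulr1 big1 ?addr0 // => y /negPf ->; by rewrite mulr0.
Qed.

Lemma card_unique (T : finType) (p : pred T) :
  (exists! y, p y) -> #|[set y | p y]| = 1%N.
Proof.
case=> y0 [py0 uy0]; have -> : [set y | p y] = [set y0].
  by apply/setP => y; rewrite !inE; apply/idP/eqP => [/uy0 -> //|->].
by rewrite cards1.
Qed.

Section ProjectivePlane.
Variables (P L : finType) (inc : P -> L -> bool) (q : nat).
Hypothesis pp : projective_plane inc q.

Lemma point_degree x : \sum_y ((inc x y)%:R : algC) = q.+1%:R.
Proof. by case: pp => _ _ h _ _; rewrite sum_indicator h. Qed.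

Lemma line_degree y : \sum_x ((inc x y)%:R : algC) = q.+1%:R.
Proof. by case: pp => _ h _ _ _; rewrite sum_indicator h. Qed.

Lemma points_common_lines x x' :
  \sum_y ((inc x y)%:R * (inc x' y)%:R : algC) = if x == x' then q.+1%:R else 1.
Proof.
have [<-|nx] := eqVneq x x'.
  rewrite -(point_degree x); apply: eq_bigr => y _.
  by case: (inc x y); rewrite ?mulr1 ?mulr0.
rewrite (eq_bigr (fun y => ((inc x y && inc x' y)%:R : algC))); last first.
  by move=> y _; case: (inc x y); case: (inc x' y); rewrite ?mulr1 ?mulr0.
by case: pp => _ _ _ h _; rewrite sum_indicator card_unique //; exact: h.
Qed.

Lemma lines_common_points y y' :
  \sum_x ((inc x y)%:R * (inc x y')%:R : algC) = if y == y' then q.+1%:R else 1.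
Proof.
have [<-|ny] := eqVneq y y'.
  rewrite -(line_degree y); apply: eq_bigr => x _.
  by case: (inc x y); rewrite ?mulr1 ?mulr0.
rewrite (eq_bigr (fun x => ((inc x y && inc x y')%:R : algC))); last first.
  by move=> x _; case: (inc x y); case: (inc x y'); rewrite ?mulr1 ?mulr0.
by case: pp => _ _ _ _ h; rewrite sum_indicator card_unique //; exact: h.
Qed.

End ProjectivePlane.

(* The linear algebra behind the classification: from the two equations for
   h(a), h(b) produced by one and two applications of the eigen-equation,
   either D = +-E for D = z (c - qk), E = c (q + 1 - k), or all four
   quantities vanish. *)
Lemma two_vertex_system (F : numFieldType) (c z k q al be SP SL : F) :
  c * al = SP - k * al - k * z * be -> c * be = SL - k * be - k * z * al ->
  c * z * al = (q + 1) * SL - k * (q + 1) * be - k * z * al - k * c * be ->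
  c * z * be = (q + 1) * SP - k * (q + 1) * al - k * z * be - k * c * al ->
  z * (c - q * k) = c * (q + 1 - k) \/ z * (c - q * k) = - (c * (q + 1 - k)) \/
  [/\ al = 0, be = 0, SP = 0 & SL = 0].
Proof.
move=> h1 h2 h3 h4; set D := z * (c - q * k); set E := c * (q + 1 - k).
have e1 : D * al = E * be.
  apply/eqP; rewrite -subr_eq0.
  have -> : D * al - E * be =
      (c * z * al - ((q + 1) * SL - k * (q + 1) * be - k * z * al - k * c * be))
      - (q + 1) * (c * be - (SL - k * be - k * z * al)) by rewrite /D /E; ring.
  by rewrite h3 h2 !subrr mulr0 subrr.
have e2 : D * be = E * al.
  apply/eqP; rewrite -subr_eq0.
  have -> : D * be - E * al =
      (c * z * be - ((q + 1) * SP - k * (q + 1) * al - k * z * be - k * c * al))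
      - (q + 1) * (c * al - (SP - k * al - k * z * be)) by rewrite /D /E; ring.
  by rewrite h4 h1 !subrr mulr0 subrr.
have [DE|DnE] := eqVneq D E; first by left.
have [DmE|DnmE] := eqVneq D (- E); first by right; left.
right; right.
have /eqP s1 : (D - E) * (al + be) = 0 by rewrite mulrBl !mulrDr e1 e2; ring.
have /eqP s2 : (D + E) * (al - be) = 0 by rewrite mulrDl !mulrBr e1 e2; ring.
move: s1; rewrite mulf_eq0 subr_eq0 (negPf DnE) /= => /eqP s1.
move: s2; rewrite mulf_eq0 addr_eq0 (negPf DnmE) /= subr_eq0 => /eqP s2.
have al0 : al = 0.
  have /eqP : 2 * al = 0 by rewrite -s1 s2; ring.
  by rewrite mulf_eq0 pnatr_eq0 => /eqP.
have be0 : be = 0 by rewrite -s2.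
by split => //; [move: h1 | move: h2]; rewrite al0 be0 !mulr0 !subr0.
Qed.

Definition edge_pair (T : eqType) (v0 v1 u w : T) : bool :=
  ((u == v0) && (w == v1)) || ((u == v1) && (w == v0)).

Definition eigenfun (V : finType) (W : V -> V -> algC) (z : algC) (h : V -> algC) :=
  forall w, \sum_u h u * W u w = z * h w.

(* The incidence graph with the weight of the edge ab changed from 1 to 1-k;
   k = 0 gives the graph itself and k = 2 the graph with ab negated, which
   are the two halves of the double switch. *)
Section ReweightedIncidence.
Variables (P L : finType) (inc : P -> L -> bool) (q : nat).
Hypothesis pp : projective_plane inc q.
Variables (a : P) (b : L).
Hypothesis hab : inc a b.

Definition reweighted (k : algC) (u w : P + L) : algC :=
  (incidence_graph inc u w)%:R - k * (edge_pair (inl a) (inr b) u w)%:R.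

Lemma reweighted_point k (h : P + L -> algC) x :
  \sum_u h u * reweighted k u (inl x) =
  \sum_y h (inr y) * (inc x y)%:R - k * (x == a)%:R * h (inr b).
Proof.
rewrite big_sumType /= big1 ?add0r; last first.
  by move=> x' _; rewrite /reweighted /edge_pair /= -!sum_eqE /= andbF mulr0 subr0 mulr0.
rewrite /reweighted /edge_pair /=.
under eq_bigr => y _ do rewrite -!sum_eqE /= mulrBr.
rewrite sumrB; congr (_ - _).
rewrite -(sum_delta (fun y => k * (x == a)%:R * h (inr y)) b); apply: eq_bigr => y _.
by case: (y == b); case: (x == a) => /=; ring.
Qed.

Lemma reweighted_line k (h : P + L -> algC) y :
  \sum_u h u * reweighted k u (inr y) =
  \sum_x h (inl x) * (inc x y)%:R - k * (y == b)%:R * h (inl a).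
Proof.
rewrite big_sumType /= [X in _ + X]big1 ?addr0; last first.
  by move=> y' _; rewrite /reweighted /edge_pair /= -!sum_eqE /= andbF !mulr0 subr0 mulr0.
rewrite /reweighted /edge_pair /=.
under eq_bigr => x _ do rewrite -!sum_eqE /= mulrBr.
rewrite sumrB; congr (_ - _).
rewrite -(sum_delta (fun x => k * (y == b)%:R * h (inl x)) a); apply: eq_bigr => x _.
by case: (y == b); case: (x == a) => /=; ring.
Qed.

(* Applying the eigen-equation twice and using the incidence identities: an
   eigenfunction h of the reweighted graph is determined, up to the sums of
   its values on points and on lines, by its two values h(a), h(b). *)
Lemma eigenfun_square_point k z h : eigenfun (reweighted k) z h ->
  forall x, (z ^+ 2 - q%:R) * h (inl x) =
    \sum_x' h (inl x') - k * (inc x b)%:R * h (inl a) - k * z * (x == a)%:R * h (inr b).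
Proof.
move=> heig x.
have EP : z * h (inl x) = \sum_y h (inr y) * (inc x y)%:R - k * (x == a)%:R * h (inr b).
  by rewrite -reweighted_point heig.
have EL y : z * h (inr y) = \sum_x h (inl x) * (inc x y)%:R - k * (y == b)%:R * h (inl a).
  by rewrite -reweighted_line heig.
have S1 : \sum_y (z * h (inr y)) * (inc x y)%:R =
   \sum_x' h (inl x') * (if x' == x then q.+1%:R else 1) - k * (inc x b)%:R * h (inl a).
  under eq_bigr => y _ do rewrite EL mulrBl.
  rewrite sumrB; congr (_ - _).
    under eq_bigr => y _ do rewrite mulr_suml.
    rewrite exchange_big; apply: eq_bigr => x' _.
    rewrite -(points_common_lines pp x' x) mulr_sumr.
    by apply: eq_bigr => y _; ring.
  rewrite -(sum_delta (fun y => k * (inc x y)%:R * h (inl a)) b).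
  by apply: eq_bigr => y _; ring.
have S2 : \sum_x' h (inl x') * (if x' == x then q.+1%:R else 1) =
          \sum_x' h (inl x') + q%:R * h (inl x).
  rewrite (bigD1 x) //= eqxx [in RHS](bigD1 x) //=.
  rewrite (eq_bigr (fun x' => h (inl x'))); last by move=> x' /negPf ->; rewrite mulr1.
  by rewrite -addn1 natrD; ring.
have -> : (z ^+ 2 - q%:R) * h (inl x) = z * (z * h (inl x)) - q%:R * h (inl x) by ring.
rewrite EP mulrBr mulr_sumr.
under eq_bigr => y _ do rewrite mulrA.
rewrite S1 S2; ring.
Qed.

Lemma eigenfun_square_line k z h : eigenfun (reweighted k) z h ->
  forall y, (z ^+ 2 - q%:R) * h (inr y) =
    \sum_y' h (inr y') - k * (inc a y)%:R * h (inr b) - k * z * (y == b)%:R * h (inl a).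
Proof.
move=> heig y.
have EP x : z * h (inl x) = \sum_y h (inr y) * (inc x y)%:R - k * (x == a)%:R * h (inr b).
  by rewrite -reweighted_point heig.
have EL : z * h (inr y) = \sum_x h (inl x) * (inc x y)%:R - k * (y == b)%:R * h (inl a).
  by rewrite -reweighted_line heig.
have S1 : \sum_x (z * h (inl x)) * (inc x y)%:R =
   \sum_y' h (inr y') * (if y' == y then q.+1%:R else 1) - k * (inc a y)%:R * h (inr b).
  under eq_bigr => x _ do rewrite EP mulrBl.
  rewrite sumrB; congr (_ - _).
    under eq_bigr => x _ do rewrite mulr_suml.
    rewrite exchange_big; apply: eq_bigr => y' _.
    rewrite -(lines_common_points pp y' y) mulr_sumr.
    by apply: eq_bigr => x _; ring.
  rewrite -(sum_delta (fun x => k * (inc x y)%:R * h (inr b)) a).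
  by apply: eq_bigr => x _; ring.
have S2 : \sum_y' h (inr y') * (if y' == y then q.+1%:R else 1) =
          \sum_y' h (inr y') + q%:R * h (inr y).
  rewrite (bigD1 y) //= eqxx [in RHS](bigD1 y) //=.
  rewrite (eq_bigr (fun y' => h (inr y'))); last by move=> y' /negPf ->; rewrite mulr1.
  by rewrite -addn1 natrD; ring.
have -> : (z ^+ 2 - q%:R) * h (inr y) = z * (z * h (inr y)) - q%:R * h (inr y) by ring.
rewrite EL mulrBr mulr_sumr.
under eq_bigr => x _ do rewrite mulrA.
rewrite S1 S2; ring.
Qed.

(* Summing the squared equation at the lines through a (resp. the points on
   b) and comparing with the eigen-equation at a (resp. b) gives a second
   relation between h(a), h(b) and the two sums. *)
Lemma eigenfun_cube_point k z h : eigenfun (reweighted k) z h ->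
  (z ^+ 2 - q%:R) * z * h (inl a) = (q%:R + 1) * \sum_y h (inr y)
     - k * (q%:R + 1) * h (inr b) - k * z * h (inl a) - k * (z ^+ 2 - q%:R) * h (inr b).
Proof.
move=> heig.
have S : \sum_y ((z ^+ 2 - q%:R) * h (inr y)) * (inc a y)%:R = (q%:R + 1) * \sum_y h (inr y)
     - k * (q%:R + 1) * h (inr b) - k * z * h (inl a).
  rewrite (eq_bigr (fun y => (\sum_y h (inr y)) * (inc a y)%:R - k * h (inr b) * (inc a y)%:R
     - (k * z * h (inl a) * (inc a y)%:R) * (y == b)%:R)); last first.
    move=> y _; rewrite (eigenfun_square_line heig).
    by case: (inc a y); case: (y == b) => /=; ring.
  rewrite !sumrB -!mulr_sumr sum_delta hab (point_degree pp a) -addn1 natrD /=; ring.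
rewrite -mulrA -[z * h (inl a)](heig (inl a)) reweighted_point mulrBr mulr_sumr.
under eq_bigr => y _ do rewrite mulrA.
rewrite S eqxx /=; ring.
Qed.

Lemma eigenfun_cube_line k z h : eigenfun (reweighted k) z h ->
  (z ^+ 2 - q%:R) * z * h (inr b) = (q%:R + 1) * \sum_x h (inl x)
     - k * (q%:R + 1) * h (inl a) - k * z * h (inr b) - k * (z ^+ 2 - q%:R) * h (inl a).
Proof.
move=> heig.
have S : \sum_x ((z ^+ 2 - q%:R) * h (inl x)) * (inc x b)%:R = (q%:R + 1) * \sum_x h (inl x)
     - k * (q%:R + 1) * h (inl a) - k * z * h (inr b).
  rewrite (eq_bigr (fun x => (\sum_x h (inl x)) * (inc x b)%:R - k * h (inl a) * (inc x b)%:R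
     - (k * z * h (inr b) * (inc x b)%:R) * (x == a)%:R)); last first.
    move=> x _; rewrite (eigenfun_square_point heig).
    by case: (inc x b); case: (x == a) => /=; ring.
  rewrite !sumrB -!mulr_sumr sum_delta hab (line_degree pp b) -addn1 natrD /=; ring.
rewrite -mulrA -[z * h (inr b)](heig (inr b)) reweighted_line mulrBr mulr_sumr.
under eq_bigr => x _ do rewrite mulrA.
rewrite S eqxx /=; ring.
Qed.

Lemma reweighted_eigen_classify k z h : (exists u, h u != 0) ->
  eigenfun (reweighted k) z h ->
  [\/ z ^+ 2 = q%:R, z * ((z ^+ 2 - q%:R) - q%:R * k) = (z ^+ 2 - q%:R) * (q%:R + 1 - k)
    | z * ((z ^+ 2 - q%:R) - q%:R * k) = - ((z ^+ 2 - q%:R) * (q%:R + 1 - k))].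
Proof.
move=> [u hu] heig.
have [c0|cn0] := eqVneq (z ^+ 2 - q%:R) 0.
  by apply: Or31; apply/eqP; rewrite -subr_eq0 c0.
have NP := eigenfun_square_point heig; have NL := eigenfun_square_line heig.
have h1 := NP a; rewrite hab eqxx /= !mulr1 in h1.
have h2 := NL b; rewrite hab eqxx /= !mulr1 in h2.
have [e|[e|[al0 be0 SP0 SL0]]] :=
  two_vertex_system h1 h2 (eigenfun_cube_point heig) (eigenfun_cube_line heig).
- exact: Or32.
- exact: Or33.
exfalso; move: hu; apply/negP; rewrite negbK.
case: u => [x|y].
- by have := NP x; rewrite al0 be0 SP0 !mulr0 !subr0 => /eqP; rewrite mulf_eq0 (negPf cn0).
- by have := NL y; rewrite al0 be0 SL0 !mulr0 !subr0 => /eqP; rewrite mulf_eq0 (negPf cn0).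
Qed.

(* Conversely, for every root t of f the following function is an
   eigenfunction of the graph with ab negated: it takes the value
   q (t - q) at a and b, (t + 1)(t - q) at the other neighbours of a and b,
   and t + 1 elsewhere. *)
Definition cubic_eigenfun (t : algC) (u : P + L) : algC :=
  let al := q%:R * (t - q%:R) in let ga := (t + 1) * (t - q%:R) in let pi := t + 1 in
  match u with
  | inl x => pi + (ga - pi) * (inc x b)%:R + (al - ga) * (x == a)%:R
  | inr y => pi + (ga - pi) * (inc a y)%:R + (al - ga) * (y == b)%:R
  end.

Lemma cubic_eigenfunP (t : algC) : hl_cubic q%:R t = 0 ->
  eigenfun (reweighted 2) t (cubic_eigenfun t).
Proof.
move=> ft [x|y].
- rewrite reweighted_point /=.
  rewrite (eq_bigr (fun y => (t + 1) * (inc x y)%:R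
     + ((t + 1) * (t - q%:R) - (t + 1)) * ((inc a y)%:R * (inc x y)%:R)
     + ((q%:R * (t - q%:R) - (t + 1) * (t - q%:R)) * (inc x y)%:R) * (y == b)%:R));
    last by move=> y _; ring.
  rewrite !big_split /= -!mulr_sumr sum_delta (point_degree pp x) (points_common_lines pp a x).
  have [<-|_] := eqVneq a x; first by rewrite hab eqxx -addn1 natrD /=; ring.
  case: (inc x b); rewrite -addn1 natrD /=; last by ring.
  by rewrite -[LHS]addr0 -ft /hl_cubic; ring.
- rewrite reweighted_line /=.
  rewrite (eq_bigr (fun x => (t + 1) * (inc x y)%:R
     + ((t + 1) * (t - q%:R) - (t + 1)) * ((inc x b)%:R * (inc x y)%:R)
     + ((q%:R * (t - q%:R) - (t + 1) * (t - q%:R)) * (inc x y)%:R) * (x == a)%:R));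
    last by move=> x _; ring.
  rewrite !big_split /= -!mulr_sumr sum_delta (line_degree pp y) (lines_common_points pp b y).
  have [<-|_] := eqVneq b y; first by rewrite hab eqxx -addn1 natrD /=; ring.
  case: (inc a y); rewrite -addn1 natrD /=; last by ring.
  by rewrite -[LHS]addr0 -ft /hl_cubic; ring.
Qed.

End ReweightedIncidence.

Definition adj_weight (V : finType) (E : rel V) (u w : V) : algC := (E u w)%:R.

Lemma sum_enum_rank (V : finType) (F : 'I_#|V| -> algC) :
  \sum_i F i = \sum_u F (enum_rank u).
Proof. by rewrite (reindex (@enum_rank V)) //; apply: onW_bij; exact: enum_rank_bij. Qed.

Lemma adjmx_root_eigenfun (V : finType) (E : rel V) z :
  root (char_poly (adjmx E)) z ->
  exists2 g : V -> algC, exists u, g u != 0 & eigenfun (adj_weight E) z g.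
Proof.
rewrite -eigenvalue_root_char => /eigenvalueP [v hv vn0].
exists (fun u => v 0 (enum_rank u)).
  case: (pickP (fun j => v 0 j != 0)) => [j hj | h0].
    by exists (enum_val j); rewrite enum_valK.
  case/eqP: vn0; apply/rowP => j; rewrite mxE; apply/eqP; exact: negbFE (h0 j).
move=> w; have := congr1 (fun M : 'rV_#|V| => M ord0 (enum_rank w)) hv; rewrite /= !mxE => <-.
by rewrite sum_enum_rank; apply: eq_bigr => u _; rewrite /adjmx mxE !enum_rankK.
Qed.

Lemma eigenfun_adjmx_root (V : finType) (E : rel V) z (g : V -> algC) :
  (exists u, g u != 0) -> eigenfun (adj_weight E) z g -> root (char_poly (adjmx E)) z.
Proof.
move=> [u hu] heig; rewrite -eigenvalue_root_char; apply/eigenvalueP.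
exists (\row_i g (enum_val i)).
  apply/rowP => j; rewrite !mxE -heig sum_enum_rank; apply: eq_bigr => x _.
  by rewrite !mxE enum_rankK.
apply/eqP => h0; have := congr1 (fun M : 'rV_#|V| => M ord0 (enum_rank u)) h0.
by rewrite !mxE enum_rankK; apply/eqP.
Qed.

(* Eigenvalues of a real symmetric weight matrix are real: z |h|^2 is the
   (self-conjugate) quadratic form h^* W h. *)
Lemma eigenfun_sym_real (V : finType) (W : V -> V -> algC) (g : V -> algC) z :
  (forall u w, W u w = W w u) -> (forall u w, W u w \is Creal) ->
  (exists u, g u != 0) -> eigenfun W z g -> z \is Creal.
Proof.
move=> Wsym Wre [u0 hu0] heig.
pose S := \sum_w (g w)^* * \sum_u g u * W u w.
have SE : S = z * \sum_w `|g w| ^+ 2.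
  rewrite /S mulr_sumr; apply: eq_bigr => w _; rewrite heig normCK; ring.
have Sr : S^* = S.
  rewrite /S rmorph_sum /=.
  under eq_bigr => w _ do rewrite rmorphM /= conjCK rmorph_sum /= mulr_sumr.
  rewrite exchange_big /=; apply: eq_bigr => u _; rewrite mulr_sumr; apply: eq_bigr => w _.
  by rewrite rmorphM /= (CrealP (Wre u w)) Wsym; ring.
have npos : 0 < \sum_w `|g w| ^+ 2.
  rewrite (bigD1 u0) //=; apply: ltr_wpDr; first by apply: sumr_ge0 => w _; rewrite exprn_ge0.
  by rewrite exprn_gt0 // normr_gt0.
have -> : z = S / \sum_w `|g w| ^+ 2 by rewrite SE mulfK // gt_eqF.
by apply: rpred_div; [rewrite CrealE Sr | exact: gtr0_real].
Qed.

Lemma char_poly_horner n (A : 'M[algC]_n) x : (char_poly A).[x] = \det (x%:M - A).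
Proof.
rewrite /char_poly -[LHS]/(horner_eval x _) -det_map_mx; congr (\det _).
apply/matrixP => i j; rewrite !mxE /horner_eval.
by rewrite -[LHS]/((_ : {poly algC}).[x]); case: (i == j); rewrite /= !hornerE.
Qed.

(* A sign d with d^2 = 1 that changes along every edge (a bipartition)
   conjugates A to -A, so chi(x) = (-1)^n chi(-x). *)
Lemma char_poly_bipartite (V : finType) (E : rel V) (d : V -> algC) :
  (forall x, d x * d x = 1) -> (forall x y, E x y -> d x * d y = -1) ->
  forall x, (char_poly (adjmx E)).[x] = (-1) ^+ #|V| * (char_poly (adjmx E)).[- x].
Proof.
move=> d2 dE x; rewrite !char_poly_horner.
pose D : 'M[algC]_#|V| := diag_mx (\row_i d (enum_val i)).
have DD : \det D * \det D = 1.
  by rewrite /D det_diag -big_split /=; apply: big1 => i _; rewrite mxE d2.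
have key : D *m (x%:M - adjmx E) *m D = x%:M + adjmx E.
  rewrite /D mul_diag_mx mul_mx_diag; apply/matrixP => i j; rewrite !mxE.
  case: eqP => [->|_] /=.
    rewrite mulrC mulrA d2.
    case hE : (E (enum_val j) (enum_val j)); last by rewrite /= subr0 addr0 mul1r.
    by have := dE _ _ hE; rewrite d2 => /eqP; rewrite -subr_eq0 opprK (pnatr_eq0 _ 2).
  rewrite !mulr0n !sub0r add0r.
  case hE : (E (enum_val i) (enum_val j)); last by rewrite /= oppr0 mulr0 mul0r.
  by rewrite /= mulrC mulrA [d _ * _]mulrC (dE _ _ hE); ring.
have -> : (- x)%:M - adjmx E = (-1) *: (x%:M + adjmx E).
  by apply/matrixP => i j; rewrite !mxE; case: (i == j); rewrite /= ?mulr1n ?mulr0n; ring.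
rewrite detZ mulrA -exprMn mulrNN mulr1 expr1n mul1r -key !det_mulmx.
by rewrite mulrC mulrA DD mul1r.
Qed.

Lemma prod_opp_seq (s : seq algC) (F : algC -> algC) :
  \prod_(z <- s) (- F z) = (-1) ^+ size s * \prod_(z <- s) F z.
Proof.
elim: s => [|y s IH]; first by rewrite !big_nil expr0 mul1r.
by rewrite !big_cons IH /= exprS; ring.
Qed.

Lemma poly_pointwise (p1 p2 : {poly algC}) : (forall x, p1.[x] = p2.[x]) -> p1 = p2.
Proof.
move=> h; apply/eqP; rewrite -subr_eq0; apply/eqP.
apply: (@roots_geq_poly_eq0 _ _ [seq i%:R | i <- iota 0 (size (p1 - p2))]).
- by apply/allP => y /mapP [i _ ->]; rewrite /root !hornerE h subrr.
- by rewrite map_inj_uniq ?iota_uniq // => i j /eqP; rewrite eqr_nat => /eqP.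
- by rewrite size_map size_iota.
Qed.

Lemma even_poly_roots (p : {poly algC}) (rs : seq algC) :
  p = \prod_(z <- rs) ('X - z%:P) -> ~~ odd (size rs) ->
  (forall x, p.[x] = p.[- x]) -> perm_eq rs (map -%R rs).
Proof.
move=> pE ev hsym; apply: prod_XsubC_eq; rewrite -pE big_map.
apply: poly_pointwise => x; rewrite hsym pE !horner_prod.
under eq_bigr => z _ do rewrite !hornerE.
under [RHS]eq_bigr => z _ do rewrite !hornerE.
rewrite (eq_bigr (fun z => - (x - - z))); last by move=> z _; ring.
by rewrite prod_opp_seq -signr_odd (negbTE ev) expr0 mul1r.
Qed.

Lemma real_spectrum n (A : 'M[algC]_n) :
  (forall z, root (char_poly A) z -> z \is Creal) ->
  exists l : seq algR, [/\ eigvals A = map algRval l,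
    sorted (fun x y => y <= x) l &
    char_poly A = \prod_(x <- l) ('X - (algRval x)%:P)].
Proof.
move=> Areal; have cpE := svalP (closed_field_poly_normal (char_poly A)).
rewrite /eigvals; set rs := sval _ in cpE *.
rewrite (monicP (char_poly_monic _)) scale1r in cpE.
pose rsR := pmap insub rs : seq algR.
have rsRE : map algRval rsR = rs.
  rewrite (pmap_filter (@insubK _ _ algR)); apply/all_filterP/allP => z zrs.
  by rewrite isSome_insub; apply: Areal; rewrite cpE root_prod_XsubC.
exists (sort (relpre algRval (fun x y : algC => y <= x)) rsR); split.
- by rewrite -rsRE sort_map.
- by apply: sort_sorted => x y; exact: le_total.
- rewrite cpE -[in LHS]rsRE big_map.
  by apply: perm_big; rewrite perm_sym perm_sort.
Qed.

Lemma sorted_sign_split (R : realDomainType) (l : seq R) (n : nat) :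
  sorted (fun x y => y <= x) l -> has (fun x => x <= 0) l ->
  count (fun x => 0 < x) l = n ->
  (forall i, (i < n)%N -> 0 < nth 0 l i) /\
  (forall i, (n <= i)%N -> (i < size l)%N -> nth 0 l i <= 0).
Proof.
move=> so hasn cnt.
have tr : transitive (fun x y : R => y <= x) by move=> y x z /= h1 h2; exact: le_trans h2 h1.
have mono := sorted_leq_nth tr (fun x : R => lexx x) 0 so.
pose i0 := find (fun x => x <= 0) l.
have i0s : (i0 < size l)%N by rewrite -has_find.
have bef i : (i < i0)%N -> 0 < nth 0 l i.
  by move=> hi; have := before_find 0 hi; rewrite ltNge => ->.
have aft i : (i0 <= i)%N -> (i < size l)%N -> nth 0 l i <= 0.
  by move=> h1 h2; apply: le_trans (nth_find 0 hasn); exact: (mono i0 i).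
suff <- : i0 = n by split.
rewrite -cnt -(cat_take_drop i0 l) count_cat.
have -> : count (fun x => 0 < x) (take i0 l) = i0.
  have : all (fun x => 0 < x) (take i0 l).
    apply/(all_nthP 0) => i; rewrite size_take i0s => hi.
    by rewrite nth_take // bef.
  by rewrite all_count size_take i0s => /eqP.
suff -> : count (fun x => 0 < x) (drop i0 l) = 0%N by rewrite addn0.
apply/eqP; rewrite -leqn0 leqNgt -has_count; apply/hasPn => x /(nthP 0) [j hj <-].
rewrite nth_drop -leNgt; apply: aft; first exact: leq_addr.
by move: hj; rewrite size_drop ltn_subRL.
Qed.

Lemma sorted_middle (R : realDomainType) (l : seq R) (n : nat) (t : R) :
  sorted (fun x y => y <= x) l -> 0 < t -> t \in l -> - t \in l ->
  (forall x, x \in l -> x != 0) -> (forall x, x \in l -> 0 < x -> t <= x) ->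
  (forall x, x \in l -> x < 0 -> x <= - t) ->
  count (fun x => 0 < x) l = n -> nth 0 l n.-1 = t /\ nth 0 l n = - t.
Proof.
move=> so t0 tl mtl nz posb negb cnt.
have tr : transitive (fun x y : R => y <= x) by move=> y x z /= h1 h2; exact: le_trans h2 h1.
have mono := sorted_leq_nth tr (fun x : R => lexx x) 0 so.
have hasn : has (fun x => x <= 0) l by apply/hasP; exists (- t) => //; rewrite oppr_le0 ltW.
have [bef aft] := sorted_sign_split so hasn cnt.
have jt := index_mem t l; rewrite tl in jt.
have jm := index_mem (- t) l; rewrite mtl in jm.
have jtn : (index t l < n)%N.
  by rewrite ltnNge; apply/negP => h; have := aft _ h jt; rewrite nth_index // leNgt t0.
have jmn : (n <= index (- t) l)%N.
  rewrite leqNgt; apply/negP => /bef; rewrite nth_index //.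
  by rewrite oppr_gt0 ltNge ltW.
have hn : (n < size l)%N by apply: leq_ltn_trans jm.
have n0 : (0 < n)%N by apply: leq_ltn_trans jtn.
have hn1 : (n.-1 < size l)%N by apply: leq_ltn_trans (leq_pred n) hn.
split; apply/le_anti/andP; split.
- have := mono (index t l) n.-1 jt hn1; rewrite nth_index //; apply.
  by rewrite -ltnS prednK.
- by apply: posb; [exact: mem_nth | apply: bef; rewrite prednK].
- apply: negb; first exact: mem_nth.
  by rewrite lt_neqAle nz ?mem_nth //= aft.
- by have := mono n (index (- t) l) hn jm jmn; rewrite nth_index.
Qed.

Lemma HL_index_symmetric_gap (V : finType) (E : rel V) (t : algR) :
  ~~ odd #|V| ->
  (forall z, root (char_poly (adjmx E)) z -> z \is Creal) ->
  (forall x, (char_poly (adjmx E)).[x] = (char_poly (adjmx E)).[- x]) ->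
  0 < t -> root (char_poly (adjmx E)) (algRval t) ->
  (forall z : algR, root (char_poly (adjmx E)) (algRval z) -> z != 0 /\ (0 < z -> t <= z)) ->
  HL_index E = algRval t.
Proof.
move=> ev Ereal Esym t0 troot gap.
have [l [eigE lsort cpE]] := real_spectrum Ereal.
have {}cpE : char_poly (adjmx E) = \prod_(z <- map algRval l) ('X - z%:P).
  by rewrite cpE big_map.
have mem x : (x \in l) = root (char_poly (adjmx E)) (algRval x).
  by rewrite cpE root_prod_XsubC mem_map //; exact: val_inj.
have szl : size l = #|V|.
  by have := size_char_poly (adjmx E); rewrite cpE size_prod_XsubC size_map; case.
set N := #|V|./2; have VN : #|V| = (N + N)%N by rewrite addnn -[LHS]odd_double_half (negPf ev).
have lperm : perm_eq l (map -%R l).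
  apply: (perm_map_inj val_inj).
  have -> : map algRval (map -%R l) = map -%R (map algRval l).
    by rewrite -!map_comp; apply: eq_map => x.
  by apply: even_poly_roots cpE _ Esym; rewrite size_map szl.
have negl x : (- x \in l) = (x \in l) by rewrite (perm_mem lperm) (mem_map (@oppr_inj _)).
have cnt : count (fun x => 0 < x) l = N.
  have c1 : count (fun x => 0 < x) l = count (fun x => x < 0) l.
    by rewrite (permP lperm) count_map; apply: eq_count => x /=; rewrite oppr_gt0.
  have c2 : count (predC (fun x => 0 < x)) l = count (fun x => x < 0) l.
    apply: eq_in_count => x; rewrite mem => /gap [xn0 _] /=.
    by rewrite -leNgt le_eqVlt (negPf xn0).
  by have := count_predC (fun x => 0 < x) l; rewrite c2 -c1 szl VN !addnn => /double_inj.
have [m1 m2] : nth 0 l N.-1 = t /\ nth 0 l N = - t.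
  apply: sorted_middle cnt => //; first by rewrite mem.
  - by rewrite negl mem.
  - by move=> x; rewrite mem => /gap [].
  - by move=> x; rewrite mem => /gap [].
  - move=> x; rewrite -negl mem => /gap [_ h] xn.
    by rewrite -lerN2 opprK h // oppr_gt0.
have nl : (N < size l)%N.
  rewrite ltnNge; apply/negP => /(nth_default 0); rewrite m2 => /eqP.
  by rewrite oppr_eq0 gt_eqF.
rewrite /HL_index /eigval eigE VN.
rewrite addnn -add1n (half_bit_double N true) -doubleS half_double /=.
have nthE i : (i < size l)%N -> nth 0 (map algRval l) i = algRval (nth 0 l i).
  exact: nth_map.
rewrite !nthE ?(leq_ltn_trans (leq_pred N)) // m1 m2.
have tC0 : 0 <= algRval t.
  have : algRval 0 < algRval t by exact: t0.
  by rewrite rmorph0 => /ltW.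
by rewrite rmorphN normrN ger0_norm ?maxxx.
Qed.

Lemma sum_pair (A B : finType) (F : A * B -> algC) : \sum_x F x = \sum_a \sum_b F (a, b).
Proof. by rewrite pair_bigA; apply: eq_bigr => -[a b]. Qed.

(* The double switch commutes with exchanging the two copies: its adjacency
   weights only depend on whether the copies agree. *)
Section DoubleSwitch.
Variables (T : finType) (e : rel T) (v0 v1 : T).
Hypotheses (esym : symmetric e) (he : e v0 v1).

Lemma double_switch_sym : symmetric (double_switch e v0 v1).
Proof.
move=> [b u] [c w]; rewrite /double_switch eq_sym esym.
by rewrite orbC [(u == v1) && _]andbC [(u == v0) && _]andbC.
Qed.

Lemma double_switch_weight b u c w :
  adj_weight (double_switch e v0 v1) (b, u) (c, w) =
  if b == c then (e u w)%:R - (edge_pair v0 v1 u w)%:R else (edge_pair v0 v1 u w)%:R.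
Proof.
rewrite /adj_weight /double_switch -/(edge_pair v0 v1 u w).
have hs : edge_pair v0 v1 u w -> e u w.
  by rewrite /edge_pair => /orP[/andP[/eqP -> /eqP ->]|/andP[/eqP -> /eqP ->]] //; rewrite esym.
case: (b == c) => //; case hsw : (edge_pair v0 v1 u w); last by rewrite andbT subr0.
by rewrite (hs hsw) /= subrr.
Qed.

(* The weights of the antisymmetric half: e with the edge v0v1 negated. *)
Definition negated_weight (u w : T) : algC := (e u w)%:R - 2 * (edge_pair v0 v1 u w)%:R.

Lemma double_switch_split z (g : bool * T -> algC) :
  eigenfun (adj_weight (double_switch e v0 v1)) z g ->
  eigenfun (adj_weight e) z (fun u => g (true, u) + g (false, u)) /\
  eigenfun negated_weight z (fun u => g (true, u) - g (false, u)).
Proof.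
move=> heig.
have E d w : \sum_u g (d, u) * ((e u w)%:R - (edge_pair v0 v1 u w)%:R)
     + \sum_u g (~~ d, u) * (edge_pair v0 v1 u w)%:R = z * g (d, w).
  rewrite -heig sum_pair big_bool /=.
  case: d; last rewrite [in LHS]addrC;
    by congr (_ + _); apply: eq_bigr => u _; rewrite double_switch_weight.
split => w.
- rewrite mulrDr -(E true w) -(E false w) /= -!big_split /=.
  by apply: eq_bigr => u _; rewrite /adj_weight; ring.
- rewrite mulrBr -(E true w) -(E false w) -!big_split -sumrB /=.
  by apply: eq_bigr => u _; rewrite /negated_weight; ring.
Qed.

Lemma double_switch_lift z (h : T -> algC) : eigenfun negated_weight z h ->
  eigenfun (adj_weight (double_switch e v0 v1)) z
    (fun x => if x.1 then h x.2 else - h x.2).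
Proof.
move=> heig [d w]; rewrite sum_pair big_bool /=.
under eq_bigr => u _ do rewrite double_switch_weight.
under [X in _ + X]eq_bigr => u _ do rewrite double_switch_weight.
case: d => /=; rewrite ?mulrN -heig ?mulr_sumr -?sumrN -big_split /=;
  by apply: eq_bigr => u _; rewrite /negated_weight; ring.
Qed.

End DoubleSwitch.

Definition switch_eigen_eq (R : pzRingType) (q z : R) : Prop :=
  [\/ z ^+ 2 = q, z ^+ 2 = (q + 1) ^+ 2, hl_cubic q z = 0 | hl_cubic q (- z) = 0].

Lemma hl_cubic_rmorph (R S : pzRingType) (f : {rmorphism R -> S}) (q x : R) :
  f (hl_cubic q x) = hl_cubic (f q) (f x).
Proof. by rewrite /hl_cubic !(rmorphB, rmorphD, rmorphM, rmorphXn, rmorph_nat, rmorph1). Qed.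

Lemma switch_eigen_eq_algR (q : nat) (z : algR) :
  switch_eigen_eq (q%:R : algC) (algRval z) -> switch_eigen_eq (q%:R : algR) z.
Proof.
have valE (x : algR) : algRval x = algRval (q%:R) -> x = q%:R by move/val_inj.
case=> h; [apply: Or41 | apply: Or42 | apply: Or43 | apply: Or44]; apply: val_inj;
  by rewrite ?hl_cubic_rmorph !(rmorphXn, rmorphD, rmorphN, rmorph_nat, rmorph1, rmorph0).
Qed.

Lemma switch_eigen_eq_plain (F : idomainType) (q z : F) :
  [\/ z ^+ 2 = q, z * ((z ^+ 2 - q) - q * 0) = (z ^+ 2 - q) * (q + 1 - 0)
    | z * ((z ^+ 2 - q) - q * 0) = - ((z ^+ 2 - q) * (q + 1 - 0))] ->
  switch_eigen_eq q z.
Proof.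
rewrite !mulr0 !subr0; set c := z ^+ 2 - q => -[h|h|h]; first exact: Or41.
all: have [c0|cn0] := eqVneq c 0; first by apply: Or41; apply/eqP; rewrite -subr_eq0 -/c c0.
- have /eqP : c * (z - (q + 1)) = 0 by rewrite mulrBr [c * z]mulrC h subrr.
  by rewrite mulf_eq0 (negPf cn0) subr_eq0 => /eqP ->; apply: Or42.
- have /eqP : c * (z + (q + 1)) = 0 by rewrite mulrDr [c * z]mulrC h addNr.
  by rewrite mulf_eq0 (negPf cn0) addr_eq0 => /eqP ->; apply: Or42; rewrite sqrrN.
Qed.

Lemma switch_eigen_eq_negated (R : comNzRingType) (q z : R) :
  [\/ z ^+ 2 = q, z * ((z ^+ 2 - q) - q * 2) = (z ^+ 2 - q) * (q + 1 - 2)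
    | z * ((z ^+ 2 - q) - q * 2) = - ((z ^+ 2 - q) * (q + 1 - 2))] ->
  switch_eigen_eq q z.
Proof.
case=> h; [exact: Or41 | apply: Or43 | apply: Or44]; rewrite /hl_cubic.
- by rewrite -[RHS](subrr (z * (z ^+ 2 - q - q * 2))) {2}h; ring.
- by rewrite -[RHS](subrr (z * (z ^+ 2 - q - q * 2))) {1}h; ring.
Qed.

Lemma switch_eigen_gap (R : realFieldType) (s t z : R) : 2 <= s ^+ 2 -> 0 < s ->
  0 < t -> t < s -> hl_cubic (s ^+ 2) t = 0 -> switch_eigen_eq (s ^+ 2) z ->
  z != 0 /\ (0 < z -> t <= z).
Proof.
move=> hq hs ht hts ft [h|h|h|h]; split.
- by apply/eqP => z0; move: h; rewrite z0; lra.
- by move=> z0; rewrite leNgt; apply/negP => zt; nra.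
- by apply/eqP => z0; move: h; rewrite z0; nra.
- by move=> z0; rewrite leNgt; apply/negP => zt; nra.
- apply/eqP => z0; move: h; rewrite z0 /hl_cubic; nra.
- move=> z0; rewrite leNgt; apply/negP => zt.
  by have := hl_cubic_decr hq hs (ltW z0) zt (ltW hts); rewrite h ft ltxx.
- apply/eqP => z0; move: h; rewrite z0 oppr0 /hl_cubic; nra.
- move=> z0; rewrite leNgt; apply/negP => zt.
  by have := hl_cubic_opp_gt0 hq hs z0 (ltW (lt_trans zt hts)); rewrite h ltxx.
Qed.

Lemma incidence_graph_sym (P L : finType) (inc : P -> L -> bool) :
  symmetric (incidence_graph inc).
Proof. by move=> [x|y] [x'|y']. Qed.

Lemma incidence_edge (P L : finType) (inc : P -> L -> bool) v0 v1 :
  incidence_graph inc v0 v1 ->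
  exists a b, inc a b /\ edge_pair v0 v1 =2 edge_pair (inl a) (inr b).
Proof.
case: v0 => [x|y]; case: v1 => [x'|y'] //= h.
- by exists x, y'.
- by exists x', y; split => // u w; rewrite /edge_pair orbC.
Qed.

Section DoubledPlane.
Variables (P L : finType) (inc : P -> L -> bool) (q : nat).
Hypothesis pp : projective_plane inc q.
Variables v0 v1 : P + L.
Hypothesis he : incidence_graph inc v0 v1.

Let G := double_switch (incidence_graph inc) v0 v1.

Lemma doubled_plane_eigen z : root (char_poly (adjmx G)) z ->
  z \is Creal /\ switch_eigen_eq q%:R z.
Proof.
have esym := @incidence_graph_sym _ _ inc.
have [a [b [hab hsw]]] := incidence_edge he.
move/adjmx_root_eigenfun => [g [[c u] gx] heig]; split.
  apply: eigenfun_sym_real heig; last by exists (c, u).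
    by move=> x y; rewrite /adj_weight /G (double_switch_sym _ _ esym).
  by move=> x y; exact: realn.
have [Hp Hm] := double_switch_split esym he heig.
(* If the symmetric part vanishes, the antisymmetric part is a nonzero
   eigenfunction of the plane with ab negated (k = 2); otherwise the
   symmetric part is one of the plane itself (k = 0). *)
have [gp0|gpn0] := eqVneq (g (true, u) + g (false, u)) 0.
- apply/switch_eigen_eq_negated/(reweighted_eigen_classify pp hab (k := 2)
    (h := fun u => g (true, u) - g (false, u))).
    exists u; apply: contraNneq gx => /= gm0.
    have : 2 * g (true, u) = (g (true, u) + g (false, u)) + (g (true, u) - g (false, u)).
      by ring.
    rewrite gp0 gm0 addr0 => /eqP; rewrite mulf_eq0 pnatr_eq0 /= => /eqP gt0.
    by case: c; apply/eqP; move: gp0; rewrite gt0 // add0r.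
  by move=> w; rewrite -Hm; apply: eq_bigr => y _; rewrite /reweighted /negated_weight hsw.
- apply/switch_eigen_eq_plain/(reweighted_eigen_classify pp hab (k := 0)
    (h := fun u => g (true, u) + g (false, u))).
    by exists u.
  by move=> w; rewrite -Hp; apply: eq_bigr => y _; rewrite /reweighted mul0r subr0.
Qed.

(* The roots of f are eigenvalues, via the antisymmetric lift of the
   cubic eigenfunction; it does not vanish at a since f(q) = -q(q+1). *)
Lemma doubled_plane_cubic_root (t : algC) : (0 < q)%N -> hl_cubic q%:R t = 0 ->
  root (char_poly (adjmx G)) t.
Proof.
move=> q0 ft; have esym := @incidence_graph_sym _ _ inc.
have [a [b [hab hsw]]] := incidence_edge he.
apply: (eigenfun_adjmx_root (g := fun x =>
    if x.1 then cubic_eigenfun inc q a b t x.2 else - cubic_eigenfun inc q a b t x.2)).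
  exists (true, inl a); rewrite /= hab eqxx /=.
  have -> : t + 1 + ((t + 1) * (t - q%:R) - (t + 1)) * 1 +
      (q%:R * (t - q%:R) - (t + 1) * (t - q%:R)) * 1 = q%:R * (t - q%:R) by ring.
  rewrite mulf_neq0 ?pnatr_eq0 -?lt0n // subr_eq0; apply/eqP => tq; move: ft; rewrite tq.
  have -> : hl_cubic (q%:R : algC) q%:R = - (q * q + q)%:R.
    by rewrite /hl_cubic natrD natrM; ring.
  by move/eqP; rewrite oppr_eq0 pnatr_eq0 addn_eq0 (negPf (lt0n_neq0 q0)) andbF.
apply: (double_switch_lift esym he) => w.
rewrite -(cubic_eigenfunP pp hab ft w); apply: eq_bigr => u _.
by rewrite /reweighted /negated_weight hsw.
Qed.

(* Every edge of the double switch projects to an edge of the incidence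
   graph, so the double switch is bipartite (points / lines). *)
Lemma doubled_plane_edge x y : G x y -> incidence_graph inc x.2 y.2.
Proof.
have esym := @incidence_graph_sym _ _ inc.
case: x y => [c u] [d w]; rewrite /G /double_switch -/(edge_pair v0 v1 u w).
case: (c == d) => [/andP[]//|] /=.
by rewrite /edge_pair => /orP[/andP[/eqP -> /eqP ->]|/andP[/eqP -> /eqP ->]] //; rewrite esym.
Qed.

(* Bipartite of even order: the characteristic polynomial is even. *)
Lemma doubled_plane_char_even x :
  (char_poly (adjmx G)).[x] = (char_poly (adjmx G)).[- x].
Proof.
have -> : (char_poly (adjmx G)).[x] = (-1) ^+ #|{: bool * (P + L)}| * (char_poly (adjmx G)).[- x].
  apply: (char_poly_bipartite (d := fun x => if x.2 is inl _ then 1 else -1)).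
    by move=> [c [u|u]] /=; rewrite ?mulr1 ?mulrNN ?mulr1.
  by move=> [c [x1|y1]] [d [x2|y2]] /doubled_plane_edge //= _; rewrite ?mulr1 ?mul1r.
have sgn : (-1) ^+ #|{: bool * (P + L)}| = 1 :> algC.
  by rewrite card_prod card_bool mul2n -signr_odd odd_double expr0.
by rewrite sgn mul1r.
Qed.

Lemma doubled_plane_HL_index (s t : algR) : s ^+ 2 = q%:R -> 0 < s ->
  0 < t -> t < s -> hl_cubic (s ^+ 2) t = 0 -> HL_index G = algRval t.
Proof.
move=> sq s0 t0 ts ft.
have q2 : (2 <= q)%N by case: pp.
have hq : 2 <= s ^+ 2 by rewrite sq ler_nat.
apply: (HL_index_symmetric_gap _ _ _ t0) => [||||z].
- by rewrite card_prod card_bool mul2n odd_double.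
- by move=> z /doubled_plane_eigen [].
- exact: doubled_plane_char_even.
- apply: doubled_plane_cubic_root; first exact: ltnW.
  by rewrite -(rmorph_nat algRval) -hl_cubic_rmorph -sq ft rmorph0.
move=> /doubled_plane_eigen [_ /switch_eigen_eq_algR]; rewrite -sq.
exact: switch_eigen_gap hq s0 t0 ts ft.
Qed.

End DoubledPlane.

Lemma sqrt_nat_ge (R : rcfType) (n m : nat) : (n * n <= m)%N -> n%:R <= Num.sqrt (m%:R : R).
Proof.
move=> nm; have -> : (n%:R : R) = Num.sqrt (n%:R ^+ 2) by rewrite sqrtr_sqr ger0_norm ?ler0n.
by apply: ler_wsqrtr; rewrite -natrX ler_nat expnS expn1.
Qed.

Lemma sqrtC_algR (m : nat) : sqrtC (m%:R : algC) = algRval (Num.sqrt (m%:R : algR)).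
Proof.
have s0 : 0 <= algRval (Num.sqrt (m%:R : algR)).
  have h := sqrtr_ge0 (m%:R : algR).
  have : algRval 0 <= algRval (Num.sqrt (m%:R : algR)) by exact: h.
  by rewrite rmorph0.
apply/eqP; rewrite -(@eqrXn2 _ 2) // ?sqrtC_ge0 ?ler0n // sqrtCK -rmorphXn.
by rewrite sqr_sqrtr ?ler0n // rmorph_nat.
Qed.

Lemma algRval_bound (c s : algR) :
  algRval (s - 1 - 1 / (c * s)) = algRval s - 1 - 1 / (algRval c * algRval s).
Proof. by rewrite !(rmorphB, rmorph1, rmorphM, fmorphV) !mul1r. Qed.

Theorem mainTheorem9 :
  forall eps : algC, 0 < eps ->
  exists k0 : nat,
  forall k : nat, (k0 <= k)%N -> prime_power k.-1 ->
  forall (P L : finType) (inc : P -> L -> bool),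
  projective_plane inc k.-1 ->
  forall v0 v1 : (P + L)%type, incidence_graph inc v0 v1 ->
  let s := sqrtC (k.-1)%:R in
  s - 1 - 1 / (2 * s) < HL_index (double_switch (incidence_graph inc) v0 v1)
  /\ HL_index (double_switch (incidence_graph inc) v0 v1)
     < s - 1 - 1 / ((2 + eps) * s).
Proof.
move=> eps eps0; pose e : algR := in_algR (gtr0_real eps0).
have [n0 bounds] := @hl_cubic_root_asymptotics _ e eps0.
exists (n0 * n0).+1 => k hk _ P L inc pp v0 v1 he s.
have q2 : (2 <= k.-1)%N by case: pp.
pose sR : algR := Num.sqrt (k.-1)%:R.
have sq : sR ^+ 2 = (k.-1)%:R by rewrite sqr_sqrtr // ler0n.
have s0 : 0 < sR by rewrite sqrtr_gt0 ltr0n; apply: leq_trans q2.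
have sn0 : n0%:R <= sR by apply: sqrt_nat_ge; rewrite -ltnS prednK // (leq_trans _ hk).
have hq : 2 <= sR ^+ 2 by rewrite sq ler_nat.
have [t [t0 ts ft]] := hl_cubic_root_exists hq s0.
have [lo hi] := bounds sR t sn0 t0 ts ft.
rewrite /s sqrtC_algR -/sR (doubled_plane_HL_index pp he sq s0 t0 ts ft).
have val_lt (x y : algR) : x < y -> algRval x < algRval y by [].
split.
- by move: (val_lt _ _ lo); rewrite algRval_bound rmorph_nat.
- by move: (val_lt _ _ hi); rewrite algRval_bound rmorphD rmorph_nat.
Qed.
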